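(* For every graph $G$ and integer $k$, every execution path of naive-fvs$(G,k,\emptyset)$ that leads to a solution satisfies $|F'|\le 3|V_-|$.
   Context: All graphs are finite, simple and undirected; $d_G(v)$ denotes the degree of $v$ in $G$, $G-S$ denotes deletion of a vertex set $S$, and $G[S]$ the induced subgraph. A feedback vertex set of $G$ is a set $V_-\subseteq V(G)$ such that $G-V_-$ is a forest. Algorithm naive-fvs$(G,k,F)$ (with $k$ an integer and $F\subseteq V(G)$ inducing a forest) returns a set of vertices or ``NO'' as follows (all choices among several candidates are arbitrary; degrees are in the current graph $G$): (0) If $k<0$ return NO; if $V(G)=\emptyset$ return $\emptyset$. (1) If some vertex $v$ has degree less than $2$, return naive-fvs$(G-\{v\},k,F\setminus\{v\})$. (2) If some $v\in V(G)\setminus F$ has two neighbors in the same connected component of $G[F]$, let $X=$ naive-fvs$(G-\{v\},k-1,F)$ and return $X\cup\{v\}$ (NO if $X$ is NO). (3) Pick $v\in V(G)\setminus F$ of maximum degree. (4) If $d(v)=2$: set $X=\emptyset$; while $G$ contains a cycle $C$, take any vertex $x$ of $C$ not in $F$, add $x$ to $X$ and delete $x$ from $G$; then return $X$ if $|X|\le k$, else NO. (5) Let $X=$ naive-fvs$(G-\{v\},k-1,F)$; if $X$ is not NO, return $X\cup\{v\}$. (6) Return naive-fvs$(G,k,F\cup\{v\})$. An execution path is a sequence of calls $c_0,c_1,\dots,c_t$ where $c_0=$ naive-fvs$(G,k,\emptyset)$; for each $j<t$, $c_{j+1}$ is the recursive call made by $c_j$ in step 1 or step 2, or, if $c_j$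 reaches step 5, either the call of step 5 or the call of step 6 (the latter considered even if the algorithm would not actually make it); and $c_t$ terminates in step 0 or step 4 without recursion. It leads to a solution if $c_t$ returns a set (not NO). $V_-$ denotes the set of vertices deleted along the path in step 2, in step 5 (when the path follows the step-5 call), and in the loop of step 4 of $c_t$; $F'$ denotes the set of vertices added to $F$ by step 6 (when the path follows the step-6 call). *)

From HB Require Import structures.
From mathcomp Require Import all_boot all_order all_algebra.
Set Implicit Arguments. Unset Strict Implicit. Unset Printing Implicit Defensive.
Import Order.TTheory GRing.Theory Num.Theory.

(* A finite simple graph is a symmetric irreflexive relation e on a finType T.
   The "current graph" of a call of naive-fvs is the induced subgraph
   G[V] for a vertex set V : {set T}; deleting vertices = shrinking V. *)
Section NaiveFVS.
Variables (T : finType) (e : rel T).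

Definition deg (V : {set T}) (v : T) : nat := #|[set u in V | e v u]|.

Definition Frel (V F : {set T}) : rel T :=
  [rel x y | [&& x \in V :&: F, y \in V :&: F & e x y]].

Definition two_nbrs (V F : {set T}) (v : T) : Prop :=
  exists x y, [/\ x != y, x \in V :&: F, y \in V :&: F, e v x && e v y
               & connect (Frel V F) x y].

Definition is_cycle (V : {set T}) (c : seq T) : bool :=
  [&& 2 < size c, all (mem V) c, cycle e c & uniq c].

(* the while-loop of step 4: starting from G[V], repeatedly delete a vertex
   not in F lying on some cycle, until acyclic; X is the set deleted *)
Inductive loop4 (F : {set T}) : {set T} -> {set T} -> Prop :=
| loop4_done V : (forall c, ~~ is_cycle V c) -> loop4 F V set0
| loop4_step V c x X : is_cycle V c -> x \in c -> x \notin F ->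
    loop4 F (V :\ x) X -> loop4 F V (x |: X).

Definition no_low (V : {set T}) : Prop := forall u, u \in V -> 1 < deg V u.
Definition no_two (V F : {set T}) : Prop :=
  forall u, u \in V :\: F -> ~ two_nbrs V F u.
Definition maxdeg (V F : {set T}) (v : T) : Prop :=
  v \in V :\: F /\ forall u, u \in V :\: F -> deg V u <= deg V v.

(* leads V k F Vm Fp : there is an execution path starting from the call
   naive-fvs(G[V], k, F) that leads to a solution, along which the set of
   deleted vertices (steps 2, 5, and loop of step 4) is Vm and the set of
   vertices added to F by step 6 is Fp. *)
Inductive leads : {set T} -> int -> {set T} -> {set T} -> {set T} -> Prop :=
| leads_empty V k F :
    (0 <= k)%R -> V = set0 -> leads V k F set0 set0
| leads_step1 V k F v Vm Fp :
    (0 <= k)%R -> V != set0 -> v \in V -> deg V v < 2 ->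
    leads (V :\ v) k (F :\ v) Vm Fp -> leads V k F Vm Fp
| leads_step2 V k F v Vm Fp :
    (0 <= k)%R -> V != set0 -> no_low V -> v \in V :\: F -> two_nbrs V F v ->
    leads (V :\ v) (k - 1)%R F Vm Fp -> leads V k F (v |: Vm) Fp
| leads_step4 V k F v X :
    (0 <= k)%R -> V != set0 -> no_low V -> no_two V F -> maxdeg V F v ->
    deg V v = 2 -> loop4 F V X -> (#|X|%:Z <= k)%R -> leads V k F X set0
| leads_step5 V k F v Vm Fp :
    (0 <= k)%R -> V != set0 -> no_low V -> no_two V F -> maxdeg V F v ->
    deg V v != 2 -> leads (V :\ v) (k - 1)%R F Vm Fp -> leads V k F (v |: Vm) Fp
| leads_step6 V k F v Vm Fp :
    (0 <= k)%R -> V != set0 -> no_low V -> no_two V F -> maxdeg V F v ->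
    deg V v != 2 -> leads V k (v |: F) Vm Fp -> leads V k F Vm (v |: Fp).

End NaiveFVS.

(* Let the core of the current graph be its 2-core, the largest vertex set
   inducing minimum degree 2, and let D f be the degree f had when step 6 put
   it into F: at least 3 and, since f then had maximum degree, at least the
   degree of every vertex that is later still undecided.  The potential
     Phi = sum over f in F inside the core of (deg_core f - 2) / (D f - 2)
   rises by exactly 1 at step 6 and is unchanged by step 1.  Deleting an
   undecided vertex x of degree d lowers the total excess degree of the core
   by at most d, because the vertices peeled off the core carry too few edges
   to absorb more; each unit of excess is worth at most 1 / (max d 3 - 2) in
   Phi, so Phi drops by at most 3.  Hence |F'| + Phi <= 3 |V_-| along every
   execution path, by induction from its end, where the graph left by step 4
   is acyclic and so has an empty core. *)

From Pilot Require Import Defs.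
From mathcomp Require Import all_boot all_order all_algebra zify lra.
Set Implicit Arguments. Unset Strict Implicit. Unset Printing Implicit Defensive.
Import Order.TTheory GRing.Theory Num.Theory.

Section NaiveFVSBound.
Variables (T : finType) (e : rel T).
Hypothesis e_sym : symmetric e.
Hypothesis e_irr : irreflexive e.

Local Notation deg := (deg e).
Local Notation no_low := (no_low e).

Lemma degE (V : {set T}) u : deg V u = \sum_(b in V) (e u b : nat).
Proof.
rewrite /Defs.deg -sum1_card big_mkcond /= [RHS]big_mkcond /=.
by apply: eq_bigr => b _; rewrite inE; case: (b \in V); case: (e u b).
Qed.

Lemma deg_subset (A B : {set T}) u : A \subset B -> deg A u <= deg B u.
Proof.
move=> AB; apply: subset_leq_card; apply/subsetP => y.
by rewrite !inE => /andP[/(subsetP AB) -> ->].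
Qed.

Lemma deg_setID (A B : {set T}) u : deg A u = deg (A :&: B) u + deg (A :\: B) u.
Proof. by rewrite !degE (big_setID B). Qed.

Lemma deg_setU_disjoint (A B : {set T}) u : [disjoint A & B] ->
  deg (A :|: B) u = deg A u + deg B u.
Proof.
move=> dAB; rewrite (deg_setID (A :|: B) B) addnC setIUl (disjoint_setI0 dAB).
by rewrite setIid set0U setDUl setDv setU0 (setDidPl dAB).
Qed.

Lemma deg_setD1_self (A : {set T}) u : deg (A :\ u) u = deg A u.
Proof.
rewrite !degE; case: (boolP (u \in A)) => uA.
  by rewrite [in RHS](big_setD1 u uA) /= e_irr add0n.
by apply: eq_bigl => b; rewrite !inE; case: eqP => // ->; rewrite (negPf uA).
Qed.

Lemma deg_set1 (x u : T) : deg [set x] u = e u x.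
Proof. by rewrite degE big_set1. Qed.

(* Counts ordered adjacent pairs, so an edge inside A :&: B counts twice. *)
Definition nedges (A B : {set T}) : nat := \sum_(a in A) deg B a.

Lemma nedgesC (A B : {set T}) : nedges A B = nedges B A.
Proof.
rewrite /nedges; under eq_bigr do rewrite degE.
rewrite exchange_big /=; apply: eq_bigr => b _; rewrite degE.
by apply: eq_bigr => a _; rewrite e_sym.
Qed.

Definition core (V : {set T}) : {set T} :=
  [set u | [exists C : {set T},
             [&& C \subset V, [forall y in C, 1 < deg C y] & u \in C]]].

Lemma core_sub (V : {set T}) : core V \subset V.
Proof.
apply/subsetP => u; rewrite inE => /existsP[C /and3P[CV _ uC]].
exact: (subsetP CV).
Qed.

Lemma core_max (V C : {set T}) : C \subset V -> no_low C -> C \subset core V.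
Proof.
move=> CV gC; apply/subsetP => u uC; rewrite inE; apply/existsP; exists C.
by rewrite CV uC andbT; apply/forall_inP.
Qed.

Lemma core_no_low (V : {set T}) : no_low (core V).
Proof.
move=> u; rewrite inE => /existsP[C /and3P[CV /forall_inP gC uC]].
apply: leq_trans (gC u uC) (deg_subset _ _).
by apply: core_max => // y /gC.
Qed.

Lemma core_id (V : {set T}) : no_low V -> core V = V.
Proof. by move=> gV; apply/eqP; rewrite eqEsubset core_sub core_max. Qed.

Lemma core_set0 : core set0 = set0.
Proof. by apply/eqP; rewrite -subset0 core_sub. Qed.

Lemma core_subset (A B : {set T}) : A \subset B -> core A \subset core B.
Proof.
by move=> AB; apply: core_max (@core_no_low A); apply: subset_trans (core_sub A) AB.
Qed.

Lemma notin_core_deg_lt2 (V : {set T}) u : deg V u < 2 -> u \notin core V.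
Proof.
move=> du; apply/negP => uc.
by have := core_no_low uc; have := deg_subset u (core_sub V); lia.
Qed.

Lemma core_setD1_notin (V : {set T}) x : x \notin core V -> core (V :\ x) = core V.
Proof.
move=> xc; apply/eqP; rewrite eqEsubset core_subset ?subsetDl //=.
apply: core_max (@core_no_low V); apply/subsetP => y yc.
by rewrite !inE (subsetP (core_sub V) y yc) andbT; apply: contraNneq xc => <-.
Qed.

Lemma core_setD1 (V : {set T}) x : core (V :\ x) = core (core V :\ x).
Proof.
apply/eqP; rewrite eqEsubset andbC core_subset ?setSD ?core_sub //=.
apply: core_max (@core_no_low _); apply/subsetP => y yc.
have /subsetP/(_ y yc) := core_subset (subsetDl V [set x]).
by have /subsetP/(_ y yc) := core_sub (V :\ x); rewrite !inE => /andP[-> _] ->.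
Qed.

Lemma exists_min_deg2_subset (A P : {set T}) : [disjoint P & A] ->
  2 * #|P| < 2 * nedges P A + nedges P P ->
  exists Q : {set T},
    [/\ Q \subset P, Q != set0 & forall q, q \in Q -> 1 < deg (Q :|: A) q].
Proof.
have [n] := ubnP #|P|; elim: n P => // n IH P /ltnSE Pn dPA dense.
case: (boolP [exists p in P, deg (P :|: A) p < 2]); last first.
  move=> /exists_inPn low; exists P; split=> // [|q /low]; last by rewrite -leqNgt.
  by apply: contraTneq dense => ->; rewrite /nedges !big_set0.
case/exists_inP=> p pP dp; set P' := P :\ p.
have dP'A : [disjoint P' & A] by apply: disjointWl dPA; apply: subsetDl.
have cardP : #|P| = #|P'|.+1 by rewrite (cardsD1 p P) pP.
have nedgesA : nedges P A = deg A p + nedges P' A.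
  by rewrite /nedges (big_setD1 p pP).
have nedgesP : nedges P P = 2 * deg P' p + nedges P' P'.
  rewrite /nedges (big_setD1 p pP) /= -/(nedges P' P) nedgesC /nedges.
  by rewrite (big_setD1 p pP) /= -/(nedges P' P') deg_setD1_self; lia.
have degp : deg P' p + deg A p <= deg (P :|: A) p.
  by rewrite -deg_setU_disjoint // deg_subset // setSU // subsetDl.
have P'n : #|P'| < n by move: Pn; rewrite cardP.
have dense' : 2 * #|P'| < 2 * nedges P' A + nedges P' P'.
  by move: dense; rewrite nedgesA nedgesP cardP; lia.
have [Q [QP' Q0 HQ]] := IH P' P'n dP'A dense'.
by exists Q; split=> //; apply: subset_trans QP' (subsetDl _ _).
Qed.

(* Otherwise a nonempty set of peeled vertices would have minimum degree 2
   together with the core. *)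
Lemma peeled_nedges_le (V : {set T}) :
  2 * nedges (V :\: core V) (core V) + nedges (V :\: core V) (V :\: core V)
  <= 2 * #|V :\: core V|.
Proof.
set P := V :\: core V; rewrite leqNgt; apply/negP => dense.
have /subsetDP[_ dPC] : P \subset V :\: core V := subxx P.
have [Q [QP Q0 HQ]] := exists_min_deg2_subset dPC dense.
have gQC : no_low (Q :|: core V).
  move=> u /setUP[/HQ //|uc].
  by apply: leq_trans (core_no_low uc) (deg_subset _ (subsetUr _ _)).
have QCV : Q :|: core V \subset V.
  by rewrite subUset core_sub andbT (subset_trans QP) ?subsetDl.
have /subsetP QC : Q \subset core V.
  by apply: subset_trans (core_max QCV gQC); apply: subsetUl.
have [q qQ] := set0Pn _ Q0.
by have := subsetP QP q qQ; rewrite inE QC.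
Qed.

(* Degree lost by u when C shrinks to C'; a vertex leaving C' is charged as
   if it kept degree 2, as it then stops contributing to the potential. *)
Definition loss (C C' : {set T}) (u : T) : nat :=
  deg C u - (if u \in C' then deg C' u else 2).

Lemma sum_loss_setD1_le (C : {set T}) x : no_low C -> x \in C ->
  \sum_(u in C :\ x) loss C (core (C :\ x)) u <= deg C x.
Proof.
move=> gC xC; have peeled := peeled_nedges_le (C :\ x).
set C' := core (C :\ x) in peeled *; set P := (C :\ x) :\: C' in peeled *.
have sC' : C' \subset C :\ x by apply: core_sub.
have degC u : deg C u = deg C' u + deg P u + e u x.
  rewrite (deg_setID C [set x]) addnC (setIidPr _) ?sub1set // deg_set1.
  by rewrite (deg_setID (C :\: [set x]) C') (setIidPr sC').
have lossC' :
    \sum_(u in C') loss C C' u = nedges C' P + \sum_(u in C') (e u x : nat).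
  rewrite /nedges -big_split /=; apply: eq_bigr => u uC.
  by rewrite /loss uC degC; lia.
have lossP : \sum_(u in P) loss C C' u + 2 * #|P|
             = nedges P C' + nedges P P + \sum_(u in P) (e u x : nat).
  rewrite -sum1_card big_distrr /= -big_split /= /nedges -!big_split /=.
  apply: eq_bigr => u; rewrite /P in_setD => /andP[/negPf uC' uCx].
  have := gC u (subsetP (subsetDl C [set x]) u uCx).
  by rewrite /loss uC' degC -/P; lia.
have degx : \sum_(u in C') (e u x : nat) + \sum_(u in P) (e u x : nat) = deg C x.
  rewrite -(setIidPr sC') -big_setID /= -deg_setD1_self degE.
  by apply: eq_bigr => u _; rewrite e_sym.
rewrite (big_setID C') /= (setIidPr sC') lossC' -/P.
by move: lossP degx peeled; rewrite (nedgesC C' P); lia.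
Qed.

(* The first vertex y of the path has a neighbour z other than its successor;
   either z is new, or the path from y to z closes a cycle with the edge yz. *)
Lemma path_extend_or_cycle (Q : {set T}) (y : T) (s : seq T) : no_low Q ->
  uniq (y :: s) -> path e y s -> all (mem Q) (y :: s) ->
  (exists c, is_cycle e Q c) \/ (exists z, [/\ z \in Q, e y z & z \notin y :: s]).
Proof.
move=> gQ uq pth alls.
have yQ : y \in Q by move/allP: alls => /(_ y (mem_head _ _)).
have [z [zQ eyz zh]] : exists z, [/\ z \in Q, e y z & z != head y s].
  have := gQ y yQ; rewrite /Defs.deg => /card_gt1P[a [b [aS bS ab]]].
  move: aS bS; rewrite !inE => /andP[aQ eya] /andP[bQ eyb].
  case: (eqVneq a (head y s)) => [ha|ha]; last by exists a.
  by exists b; split => //; rewrite -ha eq_sym.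
case: (boolP (z \in y :: s)) => zin; last by right; exists z.
left; have zy : z != y by apply: contraTneq eyz => ->; rewrite e_irr.
move: zin; rewrite in_cons (negPf zy) /= => zs.
case/splitPr: zs uq pth alls zh => s1 s2 uq pth alls zh.
case: s1 uq pth alls zh => [|h s1] uq pth alls zh; first by rewrite eqxx in zh.
exists (y :: rcons (h :: s1) z); apply/and4P; split.
- by rewrite /= size_rcons.
- apply/allP => u uc; move/allP: alls; apply.
  by move: uc; rewrite -cat_rcons -rcons_cons -cat_cons !mem_cat => ->.
- rewrite /= rcons_path last_rcons.
  move: pth; rewrite -cat_rcons cat_path /= => /andP[/andP[-> ->] _] /=.
  by rewrite e_sym.
- apply: subseq_uniq uq; rewrite -cat_rcons -rcons_cons -cat_cons.
  exact: prefix_subseq.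
Qed.

Lemma no_low_cycle (Q : {set T}) y :
  no_low Q -> y \in Q -> exists c, is_cycle e Q c.
Proof.
move=> gQ yQ.
suff grow n (y' : T) s : #|T| - size (y' :: s) <= n -> uniq (y' :: s) ->
    path e y' s -> all (mem Q) (y' :: s) -> exists c, is_cycle e Q c.
  by apply: (grow _ y [::]) => //=; rewrite yQ.
elim: n y' s => [|n IH] y' s Hn uq pth alls;
  case: (path_extend_or_cycle gQ uq pth alls) => // [[z [zQ ez zin]]];
  have uqz : uniq (z :: y' :: s) by rewrite cons_uniq zin uq.
all: have := max_card (mem (z :: y' :: s)).
all: rewrite (card_uniqP uqz) /= in Hn * => sizeT.
  by lia.
apply: (IH z (y' :: s)) => /=; first lia.
- exact: uqz.
- by rewrite e_sym ez.
- by rewrite zQ.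
Qed.

Lemma core_acyclic (V : {set T}) : (forall c, ~~ is_cycle e V c) -> core V = set0.
Proof.
move=> acyc; apply/eqP; apply: contraT => /set0Pn[y yc].
have [c /and4P[size_c /allP c_core cyc_c uniq_c]] :=
  no_low_cycle (@core_no_low V) yc.
suff : is_cycle e V c by rewrite (negPf (acyc c)).
apply/and4P; split=> //.
by apply/allP => u /c_core; apply: (subsetP (core_sub V)).
Qed.

Local Open Scope ring_scope.

Definition potential (C F : {set T}) (D : T -> nat) : rat :=
  \sum_(f in F :&: C) (deg C f - 2)%:R / (D f - 2)%:R.

Lemma potential_sub (C C' F : {set T}) (D : T -> nat) :
  C' \subset C -> no_low C' ->
  potential C F D - potential C' F D
  = \sum_(f in F :&: C) (loss C C' f)%:R / (D f - 2)%:R.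
Proof.
move=> sC' gC'.
have -> : potential C' F D
          = \sum_(f in F :&: C | f \in C') (deg C' f - 2)%:R / (D f - 2)%:R.
  apply: eq_bigl => f; rewrite !inE.
  by case fC': (f \in C'); rewrite ?(subsetP sC' f fC') ?andbT ?andbF.
rewrite big_mkcondr -sumrB; apply: eq_bigr => f _; rewrite /loss.
case: ifP => [fC'|_]; last by rewrite subr0.
have := gC' f fC'; have := deg_subset f sC' => le_deg lt_deg.
by rewrite -mulrBl -natrB; [congr (_%:R / _); lia | lia].
Qed.

Lemma potential_setD1_no_low (C F : {set T}) (D : T -> nat) x :
  no_low C -> x \in C -> x \notin F ->
  (forall f, f \in F :&: C -> (3 <= D f)%N /\ (deg C x <= D f)%N) ->
  potential C F D <= potential (core (C :\ x)) F D + 3.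
Proof.
move=> gC xC xF Dbound; set C' := core (C :\ x); set m := maxn (deg C x) 3.
have sC'C : C' \subset C by apply: subset_trans (core_sub _) (subsetDl _ _).
rewrite -lerBlDl potential_sub //; last exact: core_no_low.
(* each unit of loss costs at most 1 / (m - 2), and m - 2 >= deg C x / 3 *)
apply: (@le_trans _ _ (\sum_(f in F :&: C) (loss C C' f)%:R / (m - 2)%:R)).
  apply: ler_sum => f fFC; have [D3 Dx] := Dbound f fFC.
  by rewrite ler_wpM2l // lef_pV2 ?posrE ?ltr0n ?ler_nat; lia.
rewrite -mulr_suml -natr_sum ler_pdivrMr ?ltr0n; last lia.
rewrite -(natrM _ 3) ler_nat.
apply: (@leq_trans (\sum_(u in C :\ x) loss C C' u)).
  apply: sub_le_big => [//|a b|f]; first exact: leq_addr.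
  by rewrite !inE => /andP[fF ->]; rewrite andbT; apply: contraNneq xF => <-.
by apply: leq_trans (sum_loss_setD1_le gC xC) _; lia.
Qed.

Definition entry_degree_inv (V F : {set T}) (D : T -> nat) : Prop :=
  forall f, f \in F :&: V ->
    (3 <= D f)%N /\ forall w, w \in V :\: F -> (deg V w <= D f)%N.

Lemma entry_degree_inv_subset (V F V' F' : {set T}) D :
  entry_degree_inv V F D -> V' \subset V -> F' :&: V' = F :&: V' ->
  entry_degree_inv V' F' D.
Proof.
move=> inv sV eF f; rewrite eF => fFV'.
have [D3 Dw] := inv f (subsetP (setIS F sV) f fFV'); split=> // w.
rewrite in_setD => /andP[wF' wV']; apply: leq_trans (deg_subset w sV) (Dw w _).
rewrite in_setD (subsetP sV w wV') andbT; apply: contra wF' => wF.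
have : w \in F :&: V' by rewrite inE wF wV'.
by rewrite -eF => /setIP[].
Qed.

Lemma entry_degree_inv_setD1 (V F : {set T}) D x :
  entry_degree_inv V F D -> entry_degree_inv (V :\ x) F D.
Proof. by move=> inv; apply: entry_degree_inv_subset inv (subsetDl _ _) _. Qed.

Lemma potential_setD1 (V F : {set T}) D x :
  entry_degree_inv V F D -> x \notin F ->
  potential (core V) F D <= potential (core (V :\ x)) F D + 3.
Proof.
move=> inv xF; have [xc|xc] := boolP (x \in core V); last first.
  by rewrite core_setD1_notin // lerDl.
rewrite core_setD1; apply: (potential_setD1_no_low (@core_no_low V) xc xF) => f.
rewrite inE => /andP[fF fc]; have /subsetP sub_core := core_sub V.
have [D3 Dw] : (3 <= D f)%N /\ forall w, w \in V :\: F -> (deg V w <= D f)%N.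
  by apply: inv; rewrite inE fF sub_core.
split=> //.
apply: leq_trans (deg_subset x (core_sub V)) (Dw x _).
by rewrite inE xF sub_core.
Qed.

Lemma deletion_preserves_bound (V F Vm : {set T}) D v (a : rat) :
  entry_degree_inv V F D -> v \in V :\: F -> Vm \subset V :\ v ->
  a + potential (core (V :\ v)) F D <= 3 * #|Vm|%:R ->
  v |: Vm \subset V /\ a + potential (core V) F D <= 3 * #|v |: Vm|%:R.
Proof.
rewrite inE => inv /andP[vF vV] VmV bound; split.
  by rewrite subUset sub1set vV (subset_trans VmV) ?subsetDl.
have vVm : v \notin Vm by apply/negP => /(subsetP VmV); rewrite !inE eqxx.
rewrite cardsU1 vVm natrD mulrDr mulr1 [3 + _]addrC.
by apply: le_trans (lerD (lexx a) (potential_setD1 inv vF)) _; rewrite addrA lerD2r.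
Qed.

Lemma loop4_potential (F V X : {set T}) D :
  loop4 e F V X -> entry_degree_inv V F D ->
  X \subset V /\ potential (core V) F D <= 3 * #|X|%:R.
Proof.
elim=> {V X} [V acyc|V c x X cyc xc xF _ IH] inv.
  by rewrite sub0set core_acyclic // /potential setI0 big_set0 cards0 mulr0.
have xVF : x \in V :\: F by case/and4P: cyc => _ /allP /(_ x xc) xV; rewrite inE xF.
have [XV bound] := IH (entry_degree_inv_setD1 (x := x) inv).
by have := @deletion_preserves_bound V F X D x 0 inv xVF XV; rewrite !add0r; apply.
Qed.

Lemma entry_degree_inv_setU1 (V F : {set T}) D v :
  entry_degree_inv V F D -> maxdeg e V F v -> (3 <= deg V v)%N ->
  entry_degree_inv V (v |: F) (fun u => if u == v then deg V v else D u).
Proof.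
move=> inv [/setDP[_ vF] vmax] dv3 f.
have sub w : w \in V :\: (v |: F) -> w \in V :\: F.
  by rewrite !inE negb_or => /andP[/andP[_ ->] ->].
rewrite in_setI in_setU1 => /andP[/predU1P[->|fF] fV].
  by rewrite eqxx; split=> // w /sub/vmax.
have fv : f != v by apply: contraNneq vF => <-.
have [D3 Dw] : (3 <= D f)%N /\ forall w, w \in V :\: F -> (deg V w <= D f)%N.
  by apply: inv; rewrite inE fF fV.
by rewrite (negPf fv); split=> // w /sub/Dw.
Qed.

Lemma potential_setU1 (V F : {set T}) D v : no_low V -> v \in V :\: F ->
  (3 <= deg V v)%N ->
  potential (core V) (v |: F) (fun u => if u == v then deg V v else D u)
  = potential (core V) F D + 1.
Proof.
move=> gV /setDP[vV vF] dv3; rewrite core_id // /potential.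
rewrite setIUl (setIidPl _) ?sub1set // big_setU1 /=; last first.
  by rewrite inE (negPf vF).
rewrite eqxx divff ?pnatr_eq0 -?lt0n ?subn_gt0 // addrC; congr (_ + _).
apply: eq_bigr => f /setIP[fF _].
by have -> : (f == v) = false by apply/eqP => fv; rewrite -fv fF in vF.
Qed.

Lemma leads_potential (V : {set T}) k (F Vm Fp : {set T}) :
  leads e V k F Vm Fp -> forall D, entry_degree_inv V F D ->
  Vm \subset V /\ #|Fp|%:R + potential (core V) F D <= 3 * #|Vm|%:R.
Proof.
elim=> {V k F Vm Fp}.
- move=> V k F _ -> D _.
  by rewrite sub0set core_set0 /potential setI0 big_set0 cards0 mulr0 addr0.
- move=> V k F v Vm Fp _ _ vV dv _ IH D inv.
  have vc := notin_core_deg_lt2 dv.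
  have FvV : (F :\ v) :&: (V :\ v) = F :&: (V :\ v).
    by apply/setP => u; rewrite !inE; case: (u == v); rewrite /= ?andbF.
  have [VmV bound] := IH D (entry_degree_inv_subset inv (subsetDl V [set v]) FvV).
  split; first exact: subset_trans VmV (subsetDl _ _).
  have -> : potential (core V) F D = potential (core V) (F :\ v) D.
    apply: eq_bigl => u; rewrite !in_setI in_setD1.
    by case: eqP => // ->; rewrite (negPf vc) andbF.
  by rewrite -(core_setD1_notin vc).
- move=> V k F v Vm Fp _ _ _ vVF _ _ IH D inv.
  have [VmV bound] := IH D (entry_degree_inv_setD1 (x := v) inv).
  exact: deletion_preserves_bound inv vVF VmV bound.
- move=> V k F v X _ _ _ _ _ _ loop _ D inv.
  by have [-> bound] := loop4_potential loop inv; rewrite cards0 add0r.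
- move=> V k F v Vm Fp _ _ _ _ [vVF _] _ _ IH D inv.
  have [VmV bound] := IH D (entry_degree_inv_setD1 (x := v) inv).
  exact: deletion_preserves_bound inv vVF VmV bound.
- move=> V k F v Vm Fp _ _ gV _ vmax dv2 _ IH D inv.
  have dv3 : (3 <= deg V v)%N.
    by have /setDP[vV _] := vmax.1; have := gV v vV; move: dv2; lia.
  have [VmV bound] := IH _ (entry_degree_inv_setU1 inv vmax dv3).
  rewrite potential_setU1 ?vmax.1 // in bound; split=> //; apply: le_trans bound.
  have new_v : ((v \notin Fp)%:R : rat) <= 1 by rewrite lern1 leq_b1.
  by rewrite cardsU1 natrD; lra.
Qed.

End NaiveFVSBound.

Theorem mainTheorem6 (T : finType) (e : rel T) (e_sym : symmetric e)
  (e_irr : irreflexive e) (k : int) (Vm Fp : {set T}) :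
  leads e [set: T] k set0 Vm Fp -> #|Fp| <= 3 * #|Vm|.
Proof.
move=> path.
have inv : entry_degree_inv e [set: T] set0 (fun _ => 0).
  by move=> f; rewrite set0I inE.
have [_] := leads_potential e_sym e_irr path inv.
by rewrite /potential set0I big_set0 addr0 -(natrM _ 3) ler_nat.
Qed.
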